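(* Let $\mathscr H$ be a complex Hilbert space and $\mathbf{T}=(T_1,\dots,T_d)\in\mathbb{B}(\mathscr H)^d$ with $\|\mathbf{T}\|\neq 0$. Then $$\frac{1}{2\sqrt{d}}\Big(\|\mathbf{T}\|+\frac{c_e(\mathbf{T}^2)}{\|\mathbf{T}\|}\Big)\le w_e(\mathbf{T}).$$
   Context: $\mathbb{B}(\mathscr H)$ denotes the bounded linear operators on $\mathscr H$. For $\mathbf{T}=(T_1,\dots,T_d)\in\mathbb{B}(\mathscr H)^d$: the Euclidean operator radius is $w_e(\mathbf{T})=\sup\{(\sum_{k=1}^d|\langle T_kx,x\rangle|^2)^{1/2}: \|x\|=1\}$; the joint Crawford number is $c_e(\mathbf{T})=\inf\{(\sum_{k=1}^d|\langle T_kx,x\rangle|^2)^{1/2}: \|x\|=1\}$; the joint operator norm is $\|\mathbf{T}\|=\sup\{(\sum_{k=1}^d\|T_kx\|^2)^{1/2}: \|x\|=1\}$. Powers are componentwise: $\mathbf{T}^2=(T_1^2,\dots,T_d^2)$. *)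

From HB Require Import structures.
From mathcomp Require Import all_boot all_order all_algebra.
From mathcomp Require Import classical_sets reals.
From mathcomp Require Import complex.
Import Order.TTheory GRing.Theory Num.Theory.

Set Implicit Arguments.
Unset Strict Implicit.
Unset Printing Implicit Defensive.

Local Open Scope ring_scope.
Local Open Scope classical_set_scope.

Section Hilbert.
Variables (R : realType) (V : lmodType R[i]) (ip : V -> V -> R[i]).

Definition cmod (z : R[i]) : R := Normc.normc z.

Definition is_inner_product : Prop :=
  [/\ (forall (a : R[i]) (x y z : V), ip (a *: x + y) z = a * ip x z + ip y z),
      (forall x y : V, ip y x = conjc (ip x y)),
      (forall x : V, 0 <= ip x x) &
      (forall x : V, ip x x = 0 -> x = 0)].

Definition hnorm (x : V) : R := Num.sqrt (complex.Re (ip x x)).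

Definition ip_complete : Prop :=
  forall u : nat -> V,
    (forall e : R, 0 < e -> exists N : nat, forall m n : nat,
        (N <= m)%N -> (N <= n)%N -> hnorm (u m - u n) < e) ->
    exists l : V, forall e : R, 0 < e -> exists N : nat, forall n : nat,
        (N <= n)%N -> hnorm (u n - l) < e.

Definition is_hilbert : Prop := is_inner_product /\ ip_complete.

Definition bounded_op (T : V -> V) : Prop :=
  (forall (a : R[i]) (x y : V), T (a *: x + y) = a *: T x + T y) /\
  exists M : R, forall x : V, hnorm (T x) <= M * hnorm x.

Definition unit_sphere : set V := [set x | hnorm x = 1].

Definition op_sq (d : nat) (T : 'I_d -> V -> V) : 'I_d -> V -> V :=
  fun k x => T k (T k x).

Definition joint_numvals (d : nat) (T : 'I_d -> V -> V) : set R :=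
  (fun x => Num.sqrt (\sum_(k < d) cmod (ip (T k x) x) ^+ 2)) @` unit_sphere.

Definition w_e (d : nat) (T : 'I_d -> V -> V) : R := sup (joint_numvals T).

Definition c_e (d : nat) (T : 'I_d -> V -> V) : R := inf (joint_numvals T).

Definition joint_norm (d : nat) (T : 'I_d -> V -> V) : R :=
  sup ((fun x => Num.sqrt (\sum_(k < d) hnorm (T k x) ^+ 2)) @` unit_sphere).

End Hilbert.

From HB Require Import structures.
From mathcomp Require Import all_boot all_order all_algebra.
From mathcomp Require Import boolp classical_sets reals.
From mathcomp Require Import complex ring lra.
Import Order.TTheory GRing.Theory Num.Theory.

Set Implicit Arguments.
Unset Strict Implicit.
Unset Printing Implicit Defensive.

Local Open Scope ring_scope.

(* The heart of the proof is a single-operator estimate.  If |<Su,u>| <= W ||u||^2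
   for all u, then for every unit vector x,
     ||Sx||^2 + |<S^2 x, x>| <= 2 W ||Sx||;                          (1)
   this follows by polarization, comparing <Su,u> and <Sv,v> for
   u, v = ||Sx|| x +- b Sx with a unimodular phase b aligning the cross terms,
   together with the parallelogram law.  Applying (1) to each T_k with W = w_e(T),
   summing over k, bounding c_e(T^2) by the sum of the |<T_k^2 x, x>| and using
   Cauchy-Schwarz in R^d gives, for s = (sum_k ||T_k x||^2)^(1/2),
     s^2 + c_e(T^2) <= 2 sqrt(d) w_e(T) s.
   Passing to the supremum over the unit sphere replaces s by ||T||, and dividing
   by ||T|| > 0 yields the theorem. *)

Section ComplexModulus.
Local Open Scope complex_scope.
Variable R : realType.
Implicit Types z : R[i].

Lemma normC_cmod z : `|z| = (cmod z)%:C.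
Proof. by case: z. Qed.

Lemma cmod_ge0 z : 0 <= cmod z.
Proof. by rewrite -ler0c -normC_cmod. Qed.

Lemma cmod_real (r : R) : cmod r%:C = `|r|.
Proof. by rewrite /cmod /= expr0n /= addr0 sqrtr_sqr. Qed.

Lemma cmodM z z' : cmod (z * z') = cmod z * cmod z'.
Proof. exact: Normc.normcM. Qed.

Lemma mul_conj z : z * conjc z = `|z| ^+ 2.
Proof. by rewrite normcE sqr_sqrtc. Qed.

Lemma norm_conj z : `|conjc z| = `|z|.
Proof. by case: z => a b; rewrite !normC_cmod /cmod /= sqrrN. Qed.

Lemma conj_norm z : conjc `|z| = `|z|.
Proof. by rewrite normC_cmod conjc_real. Qed.

Lemma conjcN z : conjc (- z) = - conjc z.
Proof. exact: rmorphN. Qed.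

Lemma unimodular_phase z : exists2 b : R[i], `|b| = 1 & b ^+ 2 * z = `|z|.
Proof.
have [->|z0] := eqVneq z 0.
  by exists 1; rewrite ?normr1 // mulr0 normr0.
have nz : `|z| != 0 by rewrite normr_eq0.
exists (sqrtc (conjc z / `|z|)); last first.
  by rewrite sqr_sqrtc mulrAC [_ * z]mulrC mul_conj expr2 mulfK.
apply/eqP; rewrite -sqrp_eq1 // -normrX sqr_sqrtc normrM normfV.
by rewrite normr_id norm_conj mulfV.
Qed.

Lemma cmod0 : cmod (0 : R[i]) = 0.
Proof. by rewrite -[0]/(0%:C) cmod_real normr0. Qed.

Lemma cmodB z z' : cmod (z - z') <= cmod z + cmod z'.
Proof. by apply: le_trans (le_normcD _ _) _; rewrite normcN. Qed.

Lemma cmodMn z n : cmod (z *+ n) = cmod z *+ n.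
Proof. exact: normcMn. Qed.

Lemma cmod_conj z : cmod (conjc z) = cmod z.
Proof. by apply: complexI; rewrite -!normC_cmod norm_conj. Qed.

End ComplexModulus.

Section InnerProduct.
Local Open Scope complex_scope.
Variables (R : realType) (V : lmodType R[i]) (ip : V -> V -> R[i]).
Hypothesis ipP : is_inner_product ip.

Lemma ipDZl a x y z : ip (a *: x + y) z = a * ip x z + ip y z.
Proof. by case: ipP => h _ _ _; apply: h. Qed.

Lemma ipC x y : ip y x = conjc (ip x y).
Proof. by case: ipP => _ h _ _; apply: h. Qed.

Lemma ip_ge0 x : 0 <= ip x x.
Proof. by case: ipP => _ _ h _; apply: h. Qed.

Lemma ip_eq0 x : ip x x = 0 -> x = 0.
Proof. by case: ipP => _ _ _ h; apply: h. Qed.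

Lemma ip0l z : ip 0 z = 0.
Proof.
have := ipDZl 1 0 0 z; rewrite scaler0 addr0 mul1r.
by move=> /(congr1 (fun t => t - ip 0 z)); rewrite subrr addrK.
Qed.

Lemma ipDl x y z : ip (x + y) z = ip x z + ip y z.
Proof. by rewrite -{1}[x]scale1r ipDZl mul1r. Qed.

Lemma ipZl a x z : ip (a *: x) z = a * ip x z.
Proof. by rewrite -[a *: x]addr0 ipDZl ip0l addr0. Qed.

Lemma ipDr x y z : ip z (x + y) = ip z x + ip z y.
Proof. by rewrite [LHS]ipC ipDl (ipC x z) (ipC y z) rmorphD. Qed.

Lemma ipZr a x z : ip z (a *: x) = conjc a * ip z x.
Proof. by rewrite [LHS]ipC ipZl (ipC x z) rmorphM. Qed.

Lemma ipNl x z : ip (- x) z = - ip x z.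
Proof. by rewrite -scaleN1r ipZl mulN1r. Qed.

Lemma ipNr x z : ip z (- x) = - ip z x.
Proof. by rewrite -scaleN1r ipZr conjcN conjc1 mulN1r. Qed.

Lemma ip_comb p s q t p' s' q' t' :
  ip (p *: s + q *: t) (p' *: s' + q' *: t') =
  p * conjc p' * ip s s' + p * conjc q' * ip s t' +
  q * conjc p' * ip t s' + q * conjc q' * ip t t'.
Proof. by rewrite !ipDl !ipDr !ipZl !ipZr; ring. Qed.

Lemma hnorm_ge0 x : 0 <= hnorm ip x.
Proof. exact: sqrtr_ge0. Qed.

Lemma ip_self x : ip x x = (hnorm ip x ^+ 2)%:C.
Proof.
have x0 := ip_ge0 x.
rewrite /hnorm sqr_sqrtr; last by move: x0; rewrite lecE => /andP[].
by rewrite RRe_real // ger0_real.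
Qed.

Lemma hnorm_eq0 x : hnorm ip x = 0 -> x = 0.
Proof. by move=> x0; apply: ip_eq0; rewrite ip_self x0 expr0n. Qed.

(* The arithmetic-geometric form of Cauchy-Schwarz: 2|<y,x>| <= ||y||^2 + ||x||^2,
   obtained from the positivity of <w,w> for w = y - conj(c) x, where c is a
   unimodular number rotating <y,x> onto |<y,x>|. *)
Lemma cmod_ip_le_sqr_norms x y : cmod (ip y x) *+ 2 <= hnorm ip y ^+ 2 + hnorm ip x ^+ 2.
Proof.
set z := ip y x; have [b b1 bz] := unimodular_phase z; set c := b ^+ 2 in bz.
have cc1 : c * conjc c = 1 by rewrite mul_conj normrX b1 !expr1n.
have E : ip (1 *: y + (- conjc c) *: x) (1 *: y + (- conjc c) *: x)
    = ip y y + ip x x - `|z| *+ 2.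
  rewrite ip_comb conjc1 rmorphN /= (conjcK c) (ipC y x) -/z.
  have bz' : conjc c * conjc z = `|z| by rewrite -rmorphM bz; apply: conj_norm.
  transitivity (ip y y + ip x x - (c * z + conjc c * conjc z) + (c * conjc c - 1) * ip x x).
    by ring.
  by rewrite bz bz' cc1 subrr mul0r addr0 mulr2n.
rewrite -lecR rmorphMn rmorphD /= -normC_cmod -!ip_self -subr_ge0 -E.
exact: ip_ge0.
Qed.

Lemma parallelogram x y :
  hnorm ip (x + y) ^+ 2 + hnorm ip (x - y) ^+ 2 = (hnorm ip x ^+ 2 + hnorm ip y ^+ 2) *+ 2.
Proof.
apply: complexI; rewrite rmorphMn !rmorphD /= -!ip_self.
by rewrite !ipDl !ipDr !ipNl !ipNr; ring.
Qed.

Lemma hnormZ a x : hnorm ip (a *: x) = cmod a * hnorm ip x.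
Proof.
rewrite {1}/hnorm ipZl ipZr mulrA mul_conj ip_self normC_cmod -!rmorphXn -rmorphM /=.
by rewrite -exprMn sqrtr_sqr ger0_norm // mulr_ge0 ?cmod_ge0 ?hnorm_ge0.
Qed.

End InnerProduct.

Section Operator.
Local Open Scope complex_scope.
Variables (R : realType) (V : lmodType R[i]) (ip : V -> V -> R[i]).
Hypothesis ipP : is_inner_product ip.
Variable T : V -> V.
Hypothesis T_linear : forall a x y, T (a *: x + y) = a *: T x + T y.

Lemma op0 : T 0 = 0.
Proof.
have := T_linear 1 0 0; rewrite scaler0 addr0 scale1r.
by move=> /(congr1 (fun t => t - T 0)); rewrite subrr addrK.
Qed.

Lemma opZ a x : T (a *: x) = a *: T x.
Proof. by rewrite -[a *: x]addr0 T_linear op0 addr0. Qed.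

Lemma opD x y : T (x + y) = T x + T y.
Proof. by rewrite -{1}[x]scale1r T_linear scale1r. Qed.

Lemma opN x : T (- x) = - T x.
Proof. by rewrite -scaleN1r opZ scaleN1r. Qed.

Lemma numval_homogeneous (W : R) :
    (forall x, hnorm ip x = 1 -> cmod (ip (T x) x) <= W) ->
  forall u, cmod (ip (T u) u) <= W * hnorm ip u ^+ 2.
Proof.
move=> HW u; set h := hnorm ip u.
have [h0|hn0] := eqVneq h 0.
  by rewrite h0 expr0n mulr0 (hnorm_eq0 ipP h0) op0 (ip0l ipP) cmod0.
have hpos : 0 < h by rewrite lt_def hn0 hnorm_ge0.
have v1 : hnorm ip ((h^-1)%:C *: u) = 1.
  by rewrite hnormZ // cmod_real gtr0_norm ?invr_gt0 // mulVf.
have := HW _ v1; rewrite opZ (ipZl ipP) (ipZr ipP) conjc_real mulrA !cmodM cmod_real.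
rewrite gtr0_norm ?invr_gt0 // => Hv.
have -> : cmod (ip (T u) u) = h ^+ 2 * (h^-1 * h^-1 * cmod (ip (T u) u)) by field.
by rewrite mulrC ler_pM2r // exprn_gt0.
Qed.

Lemma numval_polarization p q :
  ip (T (p + q)) (p + q) - ip (T (p - q)) (p - q) = (ip (T p) q + ip (T q) p) *+ 2.
Proof.
rewrite !opD !opN !(ipDl ipP) !(ipDr ipP) !(ipNl ipP) !(ipNr ipP).
by rewrite mulr2n; ring.
Qed.

(* Apply polarization to p = ||Tx|| x and
   q = b Tx, with b unimodular chosen so that both cross terms align in phase. *)
Lemma sqr_norm_add_numval_le (W : R) :
    (forall u, cmod (ip (T u) u) <= W * hnorm ip u ^+ 2) ->
  forall x, hnorm ip x = 1 ->
  hnorm ip (T x) ^+ 2 + cmod (ip (T (T x)) x) <= 2 * W * hnorm ip (T x).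
Proof.
move=> HW x x1; set y := T x; set a := ip (T y) x; set n := hnorm ip y.
have [n0|nn0] := eqVneq n 0.
  by rewrite /a n0 (hnorm_eq0 ipP n0) op0 (ip0l ipP) cmod0 expr0n mulr0 addr0.
have npos : 0 < n by rewrite lt_def nn0 hnorm_ge0.
have [b b1 ba] := unimodular_phase a.
have cb1 : cmod b = 1 by apply: complexI; rewrite -normC_cmod.
have bb : b * conjc b = 1 by rewrite mul_conj b1 expr1n.
set p := n%:C *: x; set q := b *: y.
have cross : ip (T p) q + ip (T q) p = n%:C * conjc b * ((n ^+ 2)%:C + `|a|).
  rewrite /p /q !opZ !(ipZl ipP) !(ipZr ipP) conjc_real -/a (ip_self ipP y) -/n.
  (* since b conj(b) = 1, b a = conj(b) b^2 a and the two cross terms share the phase conj(b) *)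
  transitivity (n%:C * conjc b * ((n ^+ 2)%:C + b ^+ 2 * a)
                + n%:C * b * a * (1 - b * conjc b)).
    by ring.
  by rewrite bb subrr mulr0 addr0 ba.
have norms : hnorm ip (p + q) ^+ 2 + hnorm ip (p - q) ^+ 2 = (n ^+ 2) *+ 4.
  rewrite parallelogram // !hnormZ // cmod_real cb1 x1 ger0_norm ?hnorm_ge0 //.
  by rewrite mulr1 mul1r -/n -mulr2n -mulrnA.
have := cmodB (ip (T (p + q)) (p + q)) (ip (T (p - q)) (p - q)).
rewrite numval_polarization cmodMn cross !cmodM cmod_conj cb1 normC_cmod -rmorphD.
rewrite !cmod_real !ger0_norm ?addr_ge0 ?exprn_ge0 ?cmod_ge0 ?hnorm_ge0 // => Hpol.
rewrite mulr1 in Hpol.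
have Hbound : n * (n ^+ 2 + cmod a) *+ 2 <= n * (2 * W * n) *+ 2.
  apply: le_trans Hpol _; rewrite -[X in _ <= X]mulr_natr.
  have -> : n * (2 * W * n) * 2%:R = W * (n ^+ 2 *+ 4) by rewrite -mulr_natr; ring.
  by rewrite -norms mulrDr lerD.
by rewrite lerMn2r /= ler_pM2l in Hbound.
Qed.

End Operator.

Section FiniteSums.
Variables (R : realType) (d : nat) (f : 'I_d -> R).
Hypothesis f_ge0 : forall k, 0 <= f k.

Lemma sqrt_sum_sq_le_sum : Num.sqrt (\sum_k f k ^+ 2) <= \sum_k f k.
Proof.
have sum_sq : \sum_k f k ^+ 2 <= (\sum_k f k) ^+ 2.
  pose P (s t : R) := 0 <= s /\ t <= s ^+ 2.
  suff [] : P (\sum_k f k) (\sum_k f k ^+ 2) by [].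
  apply: (big_ind2 P); first by split; rewrite ?expr0n.
    by move=> s1 t1 s2 t2 [s1_ge0 le1] [s2_ge0 le2]; split; [exact: addr_ge0 | nra].
  by move=> k; split.
rewrite -(ger0_norm (sumr_ge0 _ (fun k _ => f_ge0 k))) -sqrtr_sqr.
exact: ler_wsqrtr.
Qed.

Lemma coord_le_sqrt_sum_sq k : f k <= Num.sqrt (\sum_k f k ^+ 2).
Proof.
rewrite -[f k](ger0_norm (f_ge0 k)) -sqrtr_sqr ler_wsqrtr //.
by rewrite (bigD1 k) //= lerDl sumr_ge0 // => i _; exact: sqr_ge0.
Qed.

Lemma sum_le_sqrt_dim_sqrt_sum_sq :
  \sum_k f k <= Num.sqrt d%:R * Num.sqrt (\sum_k f k ^+ 2).
Proof.
have sq_le : (\sum_k f k) ^+ 2 <= d%:R * \sum_k f k ^+ 2.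
  rewrite expr2 big_distrlr /=.
  apply: (@le_trans _ _ (\sum_(i < d) \sum_(j < d) (f i ^+ 2 + f j ^+ 2) / 2)).
    apply: ler_sum => i _; apply: ler_sum => j _.
    by have := sqr_ge0 (f i - f j); rewrite sqrrB; lra.
  have const_row (a : R) : \sum_(j < d) a = d%:R * a.
    by rewrite sumr_const card_ord mulr_natl.
  rewrite le_eqVlt; apply/orP; left; apply/eqP.
  transitivity (\sum_(i < d) (d%:R * (f i ^+ 2 / 2) + \sum_(j < d) f j ^+ 2 / 2)).
    apply: eq_bigr => i _; rewrite -const_row -big_split.
    by apply: eq_bigr => j _; rewrite mulrDl.
  by rewrite big_split /= const_row -mulr_sumr -!mulr_suml -mulrDr -splitr.
rewrite -sqrtrM ?ler0n // -(ger0_norm (sumr_ge0 _ (fun k _ => f_ge0 k))) -sqrtr_sqr.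
exact: ler_wsqrtr.
Qed.

End FiniteSums.

(* If every element s of a set S of nonnegative reals satisfies s^2 + c <= B s
   with B >= 0, then so does N = sup S: for s in S close to N,
   N^2 - s^2 = (N - s)(N + s) is small while B s <= B N. *)
Lemma sup_quadratic_bound (R : realType) (S : set R) (B c : R) :
    has_sup S -> 0 <= B -> (forall s, S s -> 0 <= s /\ s ^+ 2 + c <= B * s) ->
  sup S ^+ 2 + c <= B * sup S.
Proof.
move=> supS B0 HS; set N := sup S.
have N_ub s : S s -> s <= N by move=> Ss; exact: sup_upper_bound.
have [[s0 S_s0] _] := supS.
have N0 : 0 <= N by apply: le_trans (N_ub _ S_s0); case: (HS _ S_s0).
apply/ler_addgt0Pr => e e0.
have den0 : 0 < 2 * N + 1 by rewrite ltr_pwDr // mulr_ge0.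
have [s Ss lt_s] := sup_adherent (divr_gt0 e0 den0) supS.
have [s_ge0 quad_s] := HS s Ss; have le_sN := N_ub s Ss.
have gap : (N - s) * (N + s) <= e.
  rewrite -(divfK (lt0r_neq0 den0) e); apply: ler_pM; rewrite ?subr_ge0 ?addr_ge0 //.
    by rewrite -/N in lt_s; lra.
  by lra.
have BsN : B * s <= B * N by rewrite ler_wpM2l.
lra.
Qed.

Section JointQuantities.
Local Open Scope classical_set_scope.
Variables (R : realType) (V : lmodType R[i]) (ip : V -> V -> R[i]) (d : nat).
Variable T : 'I_d -> V -> V.
Hypothesis ipP : is_inner_product ip.
Hypothesis T_linear : forall k a x y, T k (a *: x + y) = a *: T k x + T k y.

Definition joint_norm_at (x : V) : R := Num.sqrt (\sum_(k < d) hnorm ip (T k x) ^+ 2).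

Definition joint_norm_vals : set R := joint_norm_at @` unit_sphere ip.

Lemma joint_normE : joint_norm ip T = sup joint_norm_vals.
Proof. by []. Qed.

Lemma joint_norm_has_sup : joint_norm ip T != 0 -> has_sup joint_norm_vals.
Proof.
move=> N_neq0; apply: contrapT => no_sup.
by move: N_neq0; rewrite joint_normE sup_out ?eqxx.
Qed.

Lemma c_e_le_sum x : hnorm ip x = 1 ->
  c_e ip (op_sq T) <= \sum_(k < d) cmod (ip (T k (T k x)) x).
Proof.
move=> x1; apply: le_trans (sqrt_sum_sq_le_sum (fun k => cmod_ge0 _)).
by apply: ge_inf; [exists 0 => _ [y _ <-]; exact: sqrtr_ge0 | exists x].
Qed.

Section BoundedJointNorm.
Hypothesis N_sup : has_sup joint_norm_vals.

Lemma joint_norm_at_le x : hnorm ip x = 1 -> joint_norm_at x <= joint_norm ip T.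
Proof. by move=> x1; apply: sup_upper_bound => //; exists x. Qed.

Lemma op_norm_le k x : hnorm ip x = 1 -> hnorm ip (T k x) <= joint_norm ip T.
Proof.
move=> x1; apply: le_trans (joint_norm_at_le x1).
exact: (coord_le_sqrt_sum_sq (fun i => hnorm_ge0 ip (T i x))).
Qed.

(* The joint numerical values are bounded (by d (N^2 + 1) / 2, using the
   arithmetic-geometric Cauchy-Schwarz inequality), so w_e is a true supremum. *)
Lemma joint_numvals_has_sup : has_sup (joint_numvals ip T).
Proof.
have [[_ [x0 x0_1 _]] _] := N_sup; set N := joint_norm ip T.
split; first by exists (Num.sqrt (\sum_(k < d) cmod (ip (T k x0) x0) ^+ 2)); exists x0.
exists (\sum_(k < d) ((N ^+ 2 + 1) / 2)) => _ [x x1 <-].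
apply: le_trans (sqrt_sum_sq_le_sum (fun k => cmod_ge0 (ip (T k x) x))) _.
apply: ler_sum => k _; have := cmod_ip_le_sqr_norms ipP x (T k x); rewrite x1 expr1n.
have := op_norm_le k x1; have := hnorm_ge0 ip (T k x); rewrite -/N mulr2n; nra.
Qed.

Lemma joint_numval_le_w_e x : hnorm ip x = 1 ->
  Num.sqrt (\sum_(k < d) cmod (ip (T k x) x) ^+ 2) <= w_e ip T.
Proof. by move=> x1; apply: sup_upper_bound; [exact: joint_numvals_has_sup | exists x]. Qed.

Lemma numval_le_w_e k x : hnorm ip x = 1 -> cmod (ip (T k x) x) <= w_e ip T.
Proof.
move=> x1; apply: le_trans (joint_numval_le_w_e x1).
exact: (coord_le_sqrt_sum_sq (fun i => cmod_ge0 (ip (T i x) x))).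
Qed.

Lemma w_e_ge0 : 0 <= w_e ip T.
Proof.
have [[_ [x x1 _]] _] := N_sup.
exact: le_trans (sqrtr_ge0 _) (joint_numval_le_w_e x1).
Qed.

Lemma joint_norm_at_quadratic x : hnorm ip x = 1 ->
  joint_norm_at x ^+ 2 + c_e ip (op_sq T) <= 2 * Num.sqrt d%:R * w_e ip T * joint_norm_at x.
Proof.
move=> x1; set w := w_e ip T.
have key k : hnorm ip (T k x) ^+ 2 + cmod (ip (T k (T k x)) x) <= 2 * w * hnorm ip (T k x).
  apply: (sqr_norm_add_numval_le ipP (T_linear k)) => //.
  by apply: (numval_homogeneous ipP (T_linear k)) => y y1; exact: numval_le_w_e.
rewrite /joint_norm_at sqr_sqrtr ?sumr_ge0 // => [|k _]; last exact: sqr_ge0.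
apply: (@le_trans _ _ (\sum_(k < d) (hnorm ip (T k x) ^+ 2 + cmod (ip (T k (T k x)) x)))).
  by rewrite big_split lerD2l /=; exact: c_e_le_sum.
apply: le_trans (ler_sum _ (fun k _ => key k)) _.
rewrite -mulr_sumr [X in _ <= X * _](mulrAC 2) -[X in _ <= X]mulrA.
apply: ler_wpM2l; first by rewrite mulr_ge0 ?w_e_ge0.
exact: (sum_le_sqrt_dim_sqrt_sum_sq (fun k => hnorm_ge0 ip (T k x))).
Qed.

End BoundedJointNorm.

End JointQuantities.

Theorem theorem2p4 (R : realType) (V : lmodType R[i]) (ip : V -> V -> R[i])
    (d : nat) (T : 'I_d -> V -> V) :
  is_hilbert ip ->
  (forall k : 'I_d, bounded_op ip (T k)) ->
  joint_norm ip T != 0 ->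
  (2 * Num.sqrt (d%:R : R))^-1 *
    (joint_norm ip T + c_e ip (op_sq T) / joint_norm ip T)
  <= w_e ip T.
Proof.
move=> [ipP _] T_bounded N_neq0.
have T_linear k := (T_bounded k).1.
have N_sup := joint_norm_has_sup N_neq0.
have w_ge0 := w_e_ge0 ipP N_sup.
set N := joint_norm ip T in N_neq0 *; set c := c_e ip (op_sq T); set w := w_e ip T in w_ge0 *.
have quad : N ^+ 2 + c <= 2 * Num.sqrt d%:R * w * N.
  apply: sup_quadratic_bound => //; first by rewrite !mulr_ge0 ?sqrtr_ge0.
  by move=> _ [x x1 <-]; split; [exact: sqrtr_ge0 | exact: joint_norm_at_quadratic].
have N_pos : 0 < N.
  have [[_ [x x1 _]] _] := N_sup.
  by rewrite lt_def N_neq0 (le_trans (sqrtr_ge0 _) (joint_norm_at_le N_sup x1)).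
have [->|sd_neq0] := eqVneq (2 * Num.sqrt (d%:R : R)) 0; first by rewrite invr0 mul0r.
have sd_pos : 0 < 2 * Num.sqrt (d%:R : R) by rewrite lt_def sd_neq0 mulr_ge0 ?sqrtr_ge0.
by rewrite -(ler_pM2l sd_pos) mulrA divff // mul1r -(ler_pM2r N_pos) mulrDl divfK ?gt_eqF //.
Qed.
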